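(* Let the polynomials $A_h(z)$, $h\ge 0$, be defined by $A_0(z)=z$, $A_1(z)=z^2$ and $A_{h+2}(z)=A_{h+1}(z)\bigl(A_{h+1}(z)+2A_h(z)\bigr)$ for all $h\ge 0$. For each $h$, let $\alpha_h$ be the unique positive real solution of $A_h(z)=1/3$. Let $a_n$ be the coefficient of $z^n$ in the formal power series $A(z)=\sum_{h\ge 0}A_h(z)$. Then the limit $\alpha=\lim_{h\to\infty}\alpha_h=0.5219\ldots$ exists, and \[\log_2(a_n)=n\log_2(\alpha^{-1})+\log\theta(n),\qquad n\log_2(\alpha^{-1})=n(0.938\ldots),\] for a function $\theta$ growing at most sub-exponentially, i.e. $\theta(n)=o(\kappa^n)$ for every $\kappa>1$.
   Context: $A_h(z)$ is the generating function of AVL trees of height $h$ (binary trees in which the subtrees of any node differ in height by at most one), with the conventions used by the recursion and initial conditions given; $A(z)$ is the generating function of all AVL trees and $a_n$ its counting sequence. Each $A_h$ is a non-constant polynomial with non-negative coefficients, so $A_h(z)=1/3$ has a unique positive solution. *)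

From HB Require Import structures.
From mathcomp Require Import all_boot all_order all_algebra.
From mathcomp Require Import all_classical all_reals all_analysis.
Set Implicit Arguments. Unset Strict Implicit. Unset Printing Implicit Defensive.
Import Order.TTheory GRing.Theory Num.Theory.
Local Open Scope ring_scope.

Fixpoint AVLpair (R : nzRingType) (h : nat) : {poly R} * {poly R} :=
  match h with
  | 0%N => ('X, 'X ^+ 2)
  | h'.+1 => let p := AVLpair R h' in (p.2, p.2 * (p.2 + p.1 *+ 2))
  end.

Definition AVLpoly (R : nzRingType) (h : nat) : {poly R} := (AVLpair R h).1.

(* a_n = [z^n] sum_{h>=0} A_h(z), the (finitely supported) sum of the
   n-th coefficients of the A_h, taken as the limit of partial sums. *)
Definition avl_count (R : realType) (n : nat) : R :=
  limn (fun N : nat => \sum_(h < N) (AVLpoly R h)`_n).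

Definition log2 (R : realType) (x : R) : R := ln x / ln 2.

(* Write u_h(x) = A_h(x), x > 0; u_h increases with x and u_(h+1) >= u_h^2.
   If u_h, u_(h+1) <= c < 1/3 then u_(h+2) <= 3c u_(h+1), so the orbit decays
   geometrically (x is subcritical); if u_h, u_(h+1) > 1/3 the orbit stays
   above 1/3 (x is supercritical).  At most one x is neither: on such a
   critical orbit the values are bounded below, which makes the difference of
   two critical orbits grow by a factor 5/4 at every step while it stays
   bounded.  So alpha = sup {x | x subcritical} separates the regimes, the
   roots alpha_h are squeezed towards it, and exact rational evaluation of A_7
   at 0.5219 and of A_6 at 1631/3125 brackets it.  For subcritical g < alpha,
   a_n g^n <= sum_h A_h(g) is bounded, whence a_n alpha^n / kappa^n decays
   like (alpha / (kappa g))^n. *)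

From Stdlib Require Import ZArith.
From HB Require Import structures.
From mathcomp Require Import all_boot all_order all_algebra.
From mathcomp Require Import all_classical all_reals all_analysis.
From mathcomp Require Import ring lra zify.
Import Order.TTheory GRing.Theory Num.Theory.
Import numFieldNormedType.Exports.
Set Implicit Arguments. Unset Strict Implicit. Unset Printing Implicit Defensive.
Local Open Scope classical_set_scope.
Local Open Scope ring_scope.
Local Delimit Scope Z_scope with Z.

Definition avl (R : nzRingType) (x : R) (h : nat) : R := (AVLpoly R h).[x].

Lemma AVLpolySS (R : nzRingType) h :
  AVLpoly R h.+2 = AVLpoly R h.+1 * (AVLpoly R h.+1 + AVLpoly R h *+ 2).
Proof. by []. Qed.

Section Recurrence.
Variable R : comNzRingType.
Implicit Type x : R.

Lemma avl0 x : avl x 0 = x.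
Proof. exact: hornerX. Qed.

Lemma avl1 x : avl x 1 = x ^+ 2.
Proof. exact: hornerXn. Qed.

Lemma avlSS x h : avl x h.+2 = avl x h.+1 * (avl x h.+1 + avl x h *+ 2).
Proof. by rewrite /avl AVLpolySS hornerM hornerD hornerMn. Qed.

End Recurrence.

Section Order.
Variable R : realFieldType.
Implicit Types x y c : R.

Lemma avl_gt0 x h : 0 < x -> 0 < avl x h.
Proof.
move=> x0; suff: 0 < avl x h /\ 0 < avl x h.+1 by case.
elim: h => [|h [uh uh1]]; first by rewrite avl0 avl1 exprn_gt0.
by split=> //; rewrite avlSS mulr_gt0 // ltr_wpDr // mulrn_wge0 // ltW.
Qed.

Lemma avl_lt_homo h : {in Num.pos &, {homo (@avl R)^~ h : x y / x < y}}.
Proof.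
move=> x y; rewrite !posrE => x0 y0 xy.
suff: avl x h < avl y h /\ avl x h.+1 < avl y h.+1 by case.
elim: h => [|h [lt0 lt1]]; first by rewrite !avl0 !avl1 ltrXn2r // ltW.
split=> //; rewrite !avlSS !mulr2n.
have := avl_gt0 h x0; have := avl_gt0 h.+1 x0; nra.
Qed.

Lemma avl_ler h : {in Num.pos &, {mono (@avl R)^~ h : x y / x <= y}}.
Proof. exact/le_mono_in/avl_lt_homo. Qed.

Lemma avl_ltr h : {in Num.pos &, {mono (@avl R)^~ h : x y / x < y}}.
Proof. exact/leW_mono_in/avl_ler. Qed.

Lemma avl_sqr_le x h : 0 < x -> avl x h ^+ 2 <= avl x h.+1.
Proof.
move=> x0; case: h => [|h]; first by rewrite avl0 avl1.
by rewrite avlSS expr2 ler_pM2l ?avl_gt0 // lerDl mulrn_wge0 // ltW // avl_gt0.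
Qed.

Definition subcritical x := exists h, avl x h < 3^-1 /\ avl x h.+1 < 3^-1.
Definition supercritical x := exists h, 3^-1 < avl x h /\ 3^-1 < avl x h.+1.
Definition critical x := ~ subcritical x /\ ~ supercritical x.

Lemma avl_geometric_decay x c h0 : 0 < x -> c < 3^-1 ->
  avl x h0 <= c -> avl x h0.+1 <= c ->
  forall j, avl x (h0 + j) <= c /\ avl x (h0 + j).+1 <= c * (3 * c) ^+ j.
Proof.
move=> x0 c3 le0 le1; elim=> [|j [IH0 IH1]]; first by rewrite addn0 expr0 mulr1.
have c0 : 0 <= c by apply: le_trans le0; apply/ltW/avl_gt0.
have rj0 : 0 <= (3 * c) ^+ j by rewrite exprn_ge0 // mulr_ge0.
have rj1 : (3 * c) ^+ j <= 1 by rewrite exprn_ile1 ?mulr_ge0 //; lra.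
have mc : c * (3 * c) ^+ j <= c by rewrite ler_piMr.
have u0 := avl_gt0 (h0 + j) x0; have u1 := avl_gt0 (h0 + j).+1 x0.
rewrite addnS avlSS exprS mulrCA mulrC; split; first exact: le_trans mc.
by apply: ler_pM; rewrite ?mulr2n; lra.
Qed.

Lemma supercritical_tail x h0 : 0 < x ->
  3^-1 < avl x h0 -> 3^-1 < avl x h0.+1 -> forall j, 3^-1 < avl x (h0 + j).
Proof.
move=> x0 gt0 gt1.
suff: forall j, 3^-1 < avl x (h0 + j) /\ 3^-1 < avl x (h0 + j).+1 by move=> H j; case: (H j).
elim=> [|j [IH0 IH1]]; first by rewrite addn0.
by rewrite addnS; split=> //; rewrite avlSS mulr2n; nra.
Qed.

Lemma subcritical_le x y : 0 < x -> x <= y -> subcritical y -> subcritical x.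
Proof.
move=> x0 xy [h [lt0 lt1]]; exists h.
have y0 : 0 < y by apply: lt_le_trans xy.
by split; [apply: le_lt_trans _ lt0 | apply: le_lt_trans _ lt1]; rewrite avl_ler ?posrE.
Qed.

Lemma supercritical_ge x y : 0 < x -> x <= y -> supercritical x -> supercritical y.
Proof.
move=> x0 xy [h [gt0 gt1]]; exists h.
have y0 : 0 < y by apply: lt_le_trans xy.
by split; [apply: lt_le_trans gt0 _ | apply: lt_le_trans gt1 _]; rewrite avl_ler ?posrE.
Qed.

Section Critical.
Variable z : R.
Hypotheses (z0 : 0 < z) (zc : critical z).

Lemma critical_le h : avl z h <= 3/5.
Proof.
have := avl_sqr_le h z0; have := avl_gt0 h z0.
have [le | gt] := lerP (avl z h) 3^-1; first lra.
have [le1 | gt1] := lerP (avl z h.+1) 3^-1; first by rewrite expr2; nra.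
by case: zc.2; exists h.
Qed.

Lemma critical_third_le h : 3^-1 <= avl z h \/ 3^-1 <= avl z h.+1.
Proof.
have [ge | lt] := lerP 3^-1 (avl z h); first by left.
have [ge1 | lt1] := lerP 3^-1 (avl z h.+1); first by right.
by case: zc.1; exists h.
Qed.

Lemma critical_pred_ge h : 3^-1 <= avl z h.+2 -> 23/100 <= avl z h.+1.
Proof.
rewrite avlSS mulr2n => ge.
have := critical_le h; have := avl_gt0 h z0; have := avl_gt0 h.+1 z0; nra.
Qed.

Lemma critical_ge h : 1/4 <= avl z h.+3 /\ 17/40 <= avl z h.+2 + avl z h.+3.
Proof.
have [ge3 | lt3] := lerP 3^-1 (avl z h.+3).
  by have := critical_pred_ge ge3; lra.
have ge2 : 3^-1 <= avl z h.+2 by case: (critical_third_le h.+2) => //; lra.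
have ge1 := critical_pred_ge ge2.
have : 26/100 <= avl z h.+3.
  by rewrite avlSS mulr2n; have := avl_gt0 h.+1 z0; have := avl_gt0 h.+2 z0; nra.
lra.
Qed.

End Critical.
End Order.

Lemma critical_unique (R : archiRealFieldType) (x y : R) :
  0 < x -> 0 < y -> critical x -> critical y -> x = y.
Proof.
wlog xy : x y / x <= y => [hwlog x0 y0 xc yc|].
  by have [le | /ltW ge] := lerP x y; [|apply/esym]; apply: hwlog.
move=> x0 y0 xc yc; rewrite le_eqVlt in xy; case/predU1P: xy => // xy.
pose d h := avl y h - avl x h.
(* By [critical_ge], the weight 2/5 makes D grow by a factor 5/4 at each step,
   whereas [critical_le] bounds it. *)
pose D h := d h.+1 + 2/5 * d h.
have d_gt0 h : 0 < d h by rewrite subr_gt0 avl_ltr ?posrE.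
have D_le h : D h <= 21/25.
  have := critical_le y0 yc h; have := critical_le y0 yc h.+1.
  have := avl_gt0 h x0; have := avl_gt0 h.+1 x0; rewrite /D /d; lra.
have D_grow h : 5/4 * D h.+2 <= D h.+3.
  have [ge3 ge23] := critical_ge x0 xc h.
  have := d_gt0 h.+2; have := d_gt0 h.+3; rewrite /d => dh2 dh3.
  (* D h.+3 - 5/4 * D h.+2 = e1 + 2 * e2 + e3 + e4 *)
  have e1 := mulr_ge0 (ltW dh3) (ltW dh3).
  have e2 := mulr_ge0 (ltW dh2) (ltW dh3).
  have e3 : 0 <= (2 * (avl x h.+2 + avl x h.+3) - 17/20) * (avl y h.+3 - avl x h.+3).
    by rewrite mulr_ge0 //; lra.
  have e4 : 0 <= (2 * avl x h.+3 - 1/2) * (avl y h.+2 - avl x h.+2).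
    by rewrite mulr_ge0 //; lra.
  rewrite /D /d (avlSS x h.+2) (avlSS y h.+2) !mulr2n; nra.
have D2 : 0 < D 2 by have := d_gt0 2; have := d_gt0 3; rewrite /D; lra.
have D_lin j : D 2 * (1 + j%:R / 4) <= D j.+2.
  elim: j => [|j IH]; first by rewrite mul0r addr0 mulr1.
  have := D_grow j; have := mulr_ge0 (ltW D2) (ler0n R j); rewrite -natr1; lra.
have [j jD] : exists j : nat, 4 / D 2 < j%:R.
  by exists (Num.bound (4 / D 2)); rewrite archi_boundP // divr_ge0 // ltW.
have := D_lin j; have := D_le j.+2; rewrite ltr_pdivrMr // in jD; nra.
Qed.

Section NonnegCoefficients.
Variable R : numDomainType.
Implicit Types p q : {poly R}.

Definition coef_nneg p := forall i, 0 <= p`_i.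

Lemma coef_nnegM p q : coef_nneg p -> coef_nneg q -> coef_nneg (p * q).
Proof. by move=> p0 q0 i; rewrite coefM sumr_ge0 // => j _; rewrite mulr_ge0. Qed.

Lemma coef_nnegDMn p q n : coef_nneg p -> coef_nneg q -> coef_nneg (p + q *+ n).
Proof. by move=> p0 q0 i; rewrite coefD coefMn addr_ge0 ?mulrn_wge0. Qed.

Lemma coefM_eq0 p q a b n : (forall i, (i < a)%N -> p`_i = 0) ->
  (forall j, (j < b)%N -> q`_j = 0) -> (n < a + b)%N -> (p * q)`_n = 0.
Proof.
move=> pa qb nab; rewrite coefM big1 // => -[i /= ni] _.
have [ia | ai] := ltnP i a; first by rewrite pa ?mul0r.
by rewrite qb ?mulr0 //; lia.
Qed.

Lemma coefM_gt0 p q a b c d n : coef_nneg p -> coef_nneg q ->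
  (a <= b)%N -> (c <= d)%N ->
  (forall i, (a <= i <= b)%N -> 0 < p`_i) -> (forall j, (c <= j <= d)%N -> 0 < q`_j) ->
  (a + c <= n <= b + d)%N -> 0 < (p * q)`_n.
Proof.
move=> p0 q0 ab cd pab qcd /andP [acn nbd].
pose i := maxn a (n - d).
have lt_in : (i < n.+1)%N by rewrite /i; lia.
rewrite coefM (bigD1 (Ordinal lt_in)) //= ltr_wpDr ?sumr_ge0 //.
  by move=> k _; rewrite mulr_ge0.
by rewrite mulr_gt0 // ?pab ?qcd //; rewrite /i; lia.
Qed.

Lemma coef_horner_le p x n : coef_nneg p -> 0 <= x -> p`_n * x ^+ n <= p.[x].
Proof.
move=> p0 x0; rewrite horner_coef.
have [lt_n | ge_n] := ltnP n (size p); last first.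
  by rewrite nth_default // mul0r sumr_ge0 // => i _; rewrite mulr_ge0 ?exprn_ge0.
rewrite (bigD1 (Ordinal lt_n)) //= lerDl sumr_ge0 // => i _.
by rewrite mulr_ge0 ?exprn_ge0.
Qed.

End NonnegCoefficients.

(* The least number of leaves of an AVL tree of height h: A_h has positive
   coefficients exactly in degrees min_leaves h, ..., 2^h. *)
Fixpoint min_leaves (h : nat) : nat :=
  if h is h'.+1 then (if h' is h''.+1 then min_leaves h' + min_leaves h'' else 2)
  else 1.

Lemma min_leaves_bounds h :
  [/\ h < min_leaves h, min_leaves h < min_leaves h.+1,
      min_leaves h <= 2 ^ h & min_leaves h.+1 <= (2 ^ h).+1]%N.
Proof.
elim: h => [|h [lt_h lt_S le_h le_S]] //.
have -> : min_leaves h.+2 = (min_leaves h.+1 + min_leaves h)%N by [].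
have := expn_gt0 2 h; rewrite expnS; split; lia.
Qed.

Section AVLCoefficients.
Variable R : numDomainType.

Lemma AVLpoly_coef_nneg h : coef_nneg (AVLpoly R h).
Proof.
suff: coef_nneg (AVLpoly R h) /\ coef_nneg (AVLpoly R h.+1) by case.
elim: h => [|h [nn0 nn1]]; first by split=> i; rewrite /= ?coefX ?coefXn.
by split=> //; rewrite AVLpolySS; apply: coef_nnegM => //; apply: coef_nnegDMn.
Qed.

Lemma AVLpoly_coef_eq0 h n : (n < min_leaves h)%N -> (AVLpoly R h)`_n = 0.
Proof.
move: n; suff: (forall n, (n < min_leaves h)%N -> (AVLpoly R h)`_n = 0) /\
                (forall n, (n < min_leaves h.+1)%N -> (AVLpoly R h.+1)`_n = 0) by case.
elim: h => [|h [eq0 eq1]].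
  by split=> -[|[|n]] //= _; rewrite ?coefX ?coefXn.
split=> // n; rewrite AVLpolySS => lt_n.
apply: (coefM_eq0 (b := min_leaves h) eq1 _ lt_n) => j lt_j.
have [_ lt_S _ _] := min_leaves_bounds h.
by rewrite coefD coefMn eq0 // eq1 ?mul0rn ?addr0 //; lia.
Qed.

Lemma AVLpoly_coef_gt0 h n : (min_leaves h <= n <= 2 ^ h)%N -> 0 < (AVLpoly R h)`_n.
Proof.
move: n; suff: (forall n, (min_leaves h <= n <= 2 ^ h)%N -> 0 < (AVLpoly R h)`_n) /\
  (forall n, (min_leaves h.+1 <= n <= 2 ^ h.+1)%N -> 0 < (AVLpoly R h.+1)`_n) by case.
elim: h => [|h [gt0 gt1]].
  split=> n /= range.
    by rewrite (_ : n = 1%N) ?coefX //; lia.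
  by rewrite (_ : n = 2%N) ?coefXn //; lia.
split=> // n range; rewrite AVLpolySS.
have [_ lt_S le_h le_S] := min_leaves_bounds h.
have [_ _ le_h1 _] := min_leaves_bounds h.+1.
have nn1 := AVLpoly_coef_nneg h.+1.
have nn_sum := coef_nnegDMn 2 nn1 (AVLpoly_coef_nneg h).
apply: (coefM_gt0 nn1 nn_sum le_h1 (_ : min_leaves h <= 2 ^ h.+1)%N gt1); first lia.
  move=> j /andP [lo hi]; rewrite coefD coefMn.
  have [le_jh | lt_hj] := leqP j (2 ^ h).
    rewrite ltr_wpDl ?(AVLpoly_coef_nneg h.+1 j) // pmulrn_lgt0 // gt0 //; lia.
  rewrite ltr_wpDr ?mulrn_wge0 ?(AVLpoly_coef_nneg h j) // gt1 //.
  by move: hi; rewrite expnS; lia.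
by move: range; rewrite /= expnS; lia.
Qed.

End AVLCoefficients.

Lemma min_leaves_cover n : (0 < n)%N -> exists h, (min_leaves h <= n <= 2 ^ h)%N.
Proof.
move=> n0; suff /(_ n) : forall h, (n <= 2 ^ h)%N ->
    exists h', (min_leaves h' <= n <= 2 ^ h')%N.
  by apply; rewrite ltnW // ltn_expl.
elim=> [|h IH]; first by rewrite expn0 => le_n; exists 0%N; rewrite expn0 /=; lia.
have [le_h _ | gt_h] := leqP n (2 ^ h); first exact: IH.
have [_ _ _ le_S] := min_leaves_bounds h.
by rewrite expnS => le_n; exists h.+1; rewrite expnS; lia.
Qed.

(* Negative integers are sent to 0; all lemmas below assume nonnegativity. *)
Definition Znatr {R : nzSemiRingType} (z : Z) : R := (Z.to_nat z)%:R.

Section ZEmbedding.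
Variable R : numDomainType.
Implicit Types a b : Z.

Lemma ZnatrD a b : (0 <= a)%Z -> (0 <= b)%Z -> Znatr (a + b)%Z = Znatr a + Znatr b :> R.
Proof. by move=> a0 b0; rewrite /Znatr Z2Nat.inj_add // -natrD. Qed.

Lemma ZnatrM a b : (0 <= a)%Z -> (0 <= b)%Z -> Znatr (a * b)%Z = Znatr a * Znatr b :> R.
Proof. by move=> a0 b0; rewrite /Znatr Z2Nat.inj_mul // -natrM. Qed.

Lemma ZnatrX a n : (0 <= a)%Z -> Znatr (a ^ Z.of_nat n)%Z = Znatr a ^+ n :> R.
Proof.
move=> a0; elim: n => [|n IH]; first by rewrite expr0.
rewrite Nat2Z.inj_succ Z.pow_succ_r; last lia.
by rewrite ZnatrM ?IH ?exprS //; apply: Z.pow_nonneg.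
Qed.

Lemma Znatr_le a b : (0 <= a)%Z -> (a <= b)%Z -> Znatr a <= Znatr b :> R.
Proof. by move=> a0 ab; rewrite /Znatr ler_nat; lia. Qed.

Lemma Znatr_lt a b : (0 <= a)%Z -> (a < b)%Z -> Znatr a < Znatr b :> R.
Proof. by move=> a0 ab; rewrite /Znatr ltr_nat; lia. Qed.

Lemma Znatr3 : Znatr 3%Z = 3 :> R.
Proof. by []. Qed.

Lemma Znatr_gt0 a : (0 < a)%Z -> 0 < Znatr a :> R.
Proof. by move=> a0; rewrite /Znatr ltr0n; lia. Qed.

End ZEmbedding.

(* (a/b, c/d) = (A_h(x), A_(h+1)(x)) is mapped to (A_(h+1)(x), A_(h+2)(x)),
   with unreduced fractions. *)
Definition frac_step (s : (Z * Z) * (Z * Z)) : (Z * Z) * (Z * Z) :=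
  let: ((a, b), (c, d)) := s in ((c, d), (c * (c * b + a * d * 2), d * d * b))%Z.

Definition avl_frac (p q : Z) (h : nat) : (Z * Z) * (Z * Z) :=
  iter h frac_step ((p, q), (p * p, q * q))%Z.

Section ExactEvaluation.
Variable R : realFieldType.

Definition frac_val (f : Z * Z) : R := Znatr f.1 / Znatr f.2.

Definition frac_ok (f : Z * Z) := (0 <= f.1)%Z /\ (0 < f.2)%Z.

Definition frac_repr (x : R) (h : nat) (s : (Z * Z) * (Z * Z)) :=
  [/\ frac_ok s.1, frac_ok s.2, avl x h = frac_val s.1 & avl x h.+1 = frac_val s.2].

Lemma frac_repr_step x h s : frac_repr x h s -> frac_repr x h.+1 (frac_step s).
Proof.
case: s => [[a b] [c d]] [[/= a0 b0] [/= c0 d0] eq0 eq1].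
split=> //.
  by rewrite /frac_ok /=; split; [apply: Z.mul_nonneg_nonneg | apply: Z.mul_pos_pos]; nia.
have b_neq0 : Znatr b != 0 :> R by rewrite gt_eqF // Znatr_gt0.
have d_neq0 : Znatr d != 0 :> R by rewrite gt_eqF // Znatr_gt0.
rewrite avlSS eq0 eq1 /frac_val /= !(ZnatrM, ZnatrD); try nia.
by rewrite (_ : Znatr 2%Z = 2 :> R) // mulr2n; field; rewrite b_neq0 d_neq0.
Qed.

Lemma avl_fracP p q h : (0 <= p)%Z -> (0 < q)%Z ->
  frac_repr (frac_val (p, q)) h (avl_frac p q h).
Proof.
move=> p0 q0; elim: h => [|h IH]; last exact: frac_repr_step.
split; rewrite /frac_ok /=; try nia; first by rewrite avl0.
by rewrite avl1 /frac_val /= !ZnatrM ?expr_div_n //; lia.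
Qed.

Definition below_third (s : (Z * Z) * (Z * Z)) :=
  (3 * s.1.1 <? s.1.2)%Z && (3 * s.2.1 <? s.2.2)%Z.

Definition above_third (s : (Z * Z) * (Z * Z)) :=
  (s.1.2 <? 3 * s.1.1)%Z && (s.2.2 <? 3 * s.2.1)%Z.

Lemma frac_lt_third a b : (0 <= a)%Z -> (0 < b)%Z -> (3 * a < b)%Z ->
  Znatr a / Znatr b < 3^-1 :> R.
Proof.
move=> a0 b0 ab; have : Znatr (3 * a)%Z < Znatr b :> R by apply: Znatr_lt => //; lia.
rewrite ZnatrM; try lia.
by rewrite Znatr3 ltr_pdivrMr ?Znatr_gt0 //; lra.
Qed.

Lemma frac_gt_third a b : (0 <= a)%Z -> (0 < b)%Z -> (b < 3 * a)%Z ->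
  3^-1 < Znatr a / Znatr b :> R.
Proof.
move=> a0 b0 ab; have : Znatr b < Znatr (3 * a)%Z :> R by apply: Znatr_lt => //; lia.
rewrite ZnatrM; try lia.
by rewrite Znatr3 ltr_pdivlMr ?Znatr_gt0 //; lra.
Qed.

Lemma subcritical_frac x h s : frac_repr x h s -> below_third s -> subcritical x.
Proof.
case=> [[a0 b0] [c0 d0] eq0 eq1] /andP [/Z.ltb_lt lt0 /Z.ltb_lt lt1].
by exists h; rewrite eq0 eq1; split; apply: frac_lt_third.
Qed.

Lemma supercritical_frac x h s : frac_repr x h s -> above_third s -> supercritical x.
Proof.
case=> [[a0 b0] [c0 d0] eq0 eq1] /andP [/Z.ltb_lt lt0 /Z.ltb_lt lt1].
by exists h; rewrite eq0 eq1; split; apply: frac_gt_third.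
Qed.

Lemma subcritical_5219 : subcritical (5219%:R / 10000%:R : R).
Proof.
apply: (subcritical_frac (avl_fracP (p := 5219) (q := 10000) 7 _ _)); try lia.
by vm_compute.
Qed.

Lemma supercritical_1631 : supercritical (1631%:R / 3125%:R : R).
Proof.
apply: (supercritical_frac (avl_fracP (p := 1631) (q := 3125) 6 _ _)); try lia.
by vm_compute.
Qed.

Lemma expr_div_ge (a b c : Z) (m k : nat) : (0 <= a)%Z -> (0 <= b)%Z -> (0 < c)%Z ->
  (a ^ Z.of_nat m * c ^ Z.of_nat k <=? b ^ Z.of_nat k)%Z ->
  Znatr a ^+ m <= (Znatr b / Znatr c) ^+ k :> R.
Proof.
move=> a0 b0 c0 /Z.leb_le le_abc.
rewrite expr_div_n ler_pdivlMr ?exprn_gt0 ?Znatr_gt0 // -!ZnatrX -?ZnatrM; try lia.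
by apply: Znatr_le; nia.
Qed.

Lemma expr_div_lt (a b c : Z) (m k : nat) : (0 <= a)%Z -> (0 <= b)%Z -> (0 < c)%Z ->
  (b ^ Z.of_nat k <? a ^ Z.of_nat m * c ^ Z.of_nat k)%Z ->
  (Znatr b / Znatr c) ^+ k < Znatr a ^+ m :> R.
Proof.
move=> a0 b0 c0 /Z.ltb_lt lt_abc.
rewrite expr_div_n ltr_pdivrMr ?exprn_gt0 ?Znatr_gt0 // -!ZnatrX -?ZnatrM; try lia.
by apply: Znatr_lt; lia.
Qed.

Lemma two_expr_le : (2 : R) ^+ 106 <= (3125%:R / 1631%:R) ^+ 113.
Proof. by apply: (@expr_div_ge 2 3125 1631); [lia | lia | lia | vm_compute]. Qed.

Lemma expr_lt_two : (10000%:R / 5219%:R : R) ^+ 65 < 2 ^+ 61.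
Proof. by apply: (@expr_div_lt 2 10000 5219); [lia | lia | lia | vm_compute]. Qed.

End ExactEvaluation.

Section Regimes.
Variable R : realFieldType.
Implicit Types x y : R.

Lemma subcritical_decay x : 0 < x -> subcritical x ->
  exists h0 c, [/\ 0 < c, c < 3^-1 &
    forall j, avl x (h0 + j) <= c /\ avl x (h0 + j).+1 <= c * (3 * c) ^+ j].
Proof.
move=> x0 [h0 [lt0 lt1]]; exists h0, (Num.max (avl x h0) (avl x h0.+1)).
have c3 : Num.max (avl x h0) (avl x h0.+1) < 3^-1 by rewrite gt_max lt0 lt1.
split=> //; first by rewrite lt_max avl_gt0.
by apply: avl_geometric_decay; rewrite // le_max lexx ?orbT.
Qed.

Lemma subcritical_eventually x : 0 < x -> subcritical x ->
  \forall h \near \oo, avl x h < 3^-1.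
Proof.
move=> x0 /(subcritical_decay x0) [h0 [c [_ c3 decay]]].
apply: filterS (nbhs_infty_ge h0) => h /subnKC <-.
exact: le_lt_trans (decay _).1 c3.
Qed.

Lemma supercritical_eventually x : 0 < x -> supercritical x ->
  \forall h \near \oo, 3^-1 < avl x h.
Proof.
move=> x0 [h0 [gt0 gt1]].
by apply: filterS (nbhs_infty_ge h0) => h /subnKC <-; apply: supercritical_tail.
Qed.

Lemma subcritical_supercritical x : 0 < x -> subcritical x -> ~ supercritical x.
Proof.
move=> x0 /(subcritical_eventually x0) lt /(supercritical_eventually x0) gt.
by have [h [/lt_trans lt_h /lt_h]] := filter_ex (filterI lt gt); rewrite ltxx.
Qed.

End Regimes.

Section Counting.
Variable R : realType.
Implicit Types x : R.

Lemma subcritical_sum_bounded x : 0 < x -> subcritical x ->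
  exists C, forall N, \sum_(h < N) avl x h <= C.
Proof.
move=> x0 /(subcritical_decay x0) [h0 [c [c0 c3 decay]]].
exists (\sum_(h < h0.+1) avl x h + c / (1 - 3 * c)) => N.
have avl_ge0 h : 0 <= avl x h by exact/ltW/avl_gt0.
apply: (@le_trans _ _ (\sum_(h < N + h0.+1) avl x h)).
  by rewrite big_split_ord /= lerDl sumr_ge0.
rewrite addnC big_split_ord /= lerD2l.
apply: (@le_trans _ _ (series (geometric c (3 * c)) N)).
  rewrite /series /= big_mkord; apply: ler_sum => j _.
  by rewrite addSn; exact: (decay j).2.
by apply: geometric_le_lim; rewrite ?ger0_norm; lra.
Qed.


Lemma avl_count_partial n N : (n < N)%N ->
  \sum_(h < N) (AVLpoly R h)`_n = \sum_(h < n.+1) (AVLpoly R h)`_n.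
Proof.
move=> lt_nN; rewrite -(subnKC lt_nN) big_split_ord /= [X in _ + X]big1 ?addr0 // => j _.
apply: AVLpoly_coef_eq0; have [lt_h _ _ _] := min_leaves_bounds (n.+1 + j); lia.
Qed.

Lemma avl_countE n : avl_count R n = \sum_(h < n.+1) (AVLpoly R h)`_n.
Proof.
apply: lim_near_cst; first exact: Rhausdorff.
by exists n.+1 => // N /= lt_nN; apply: avl_count_partial.
Qed.

Lemma avl_count_ge0 n : 0 <= avl_count R n.
Proof. by rewrite avl_countE sumr_ge0 // => h _; apply: AVLpoly_coef_nneg. Qed.

Lemma avl_count_gt0 n : (0 < n)%N -> 0 < avl_count R n.
Proof.
move=> /min_leaves_cover [h range]; rewrite avl_countE.
have [lt_h _ _ _] := min_leaves_bounds h.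
have lt_hn : (h < n.+1)%N by lia.
rewrite (bigD1 (Ordinal lt_hn)) //= ltr_wpDr ?AVLpoly_coef_gt0 // sumr_ge0 // => i _.
exact: AVLpoly_coef_nneg.
Qed.

Lemma avl_count_le x n : 0 <= x -> avl_count R n * x ^+ n <= \sum_(h < n.+1) avl x h.
Proof.
move=> x0; rewrite avl_countE mulr_suml; apply: ler_sum => h _.
exact: coef_horner_le (AVLpoly_coef_nneg _ _) x0.
Qed.

Lemma subcritical_count_bounded x : 0 < x -> subcritical x ->
  exists C, forall n, avl_count R n * x ^+ n <= C.
Proof.
move=> x0 /(subcritical_sum_bounded x0) [C sumC]; exists C => n.
exact: le_trans (avl_count_le n (ltW x0)) (sumC _).
Qed.

End Counting.

Lemma cvg_bounded_rescaled (R : archiRealFieldType) (u : nat -> R) (g a kappa C : R) :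
  0 < g -> 0 < a -> 0 < kappa -> a < kappa * g -> (forall n, 0 <= u n) ->
  (forall n, u n * g ^+ n <= C) -> (fun n => u n * a ^+ n / kappa ^+ n) @ \oo --> 0.
Proof.
move=> g0 a0 k0 lt_akg u0 boundC; pose rho := a / (kappa * g).
have kg0 : 0 < kappa * g by rewrite mulr_gt0.
have rho0 : 0 < rho by rewrite divr_gt0.
have rho1 : rho < 1 by rewrite ltr_pdivrMr // mul1r.
apply: (@squeeze_cvgr _ _ _ _ (cst 0) (geometric C rho)).
- apply: nearW => n; apply/andP; split.
    by rewrite divr_ge0 ?mulr_ge0 ?exprn_ge0 // ltW.
  have -> : u n * a ^+ n / kappa ^+ n = u n * g ^+ n * rho ^+ n.
    by rewrite /rho expr_div_n exprMn; field; rewrite !expf_neq0 // gt_eqF.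
  by rewrite /geometric /= ler_pM2r ?exprn_gt0.
- exact: cvg_cst.
- by apply: cvg_geometric; rewrite ger0_norm // ltW.
Qed.

Section Log2.
Variable R : realType.
Implicit Types x y : R.

Lemma ln2_gt0 : 0 < ln (2 : R).
Proof. by rewrite ln_gt0 // ltr1n. Qed.

Lemma log2M x y : 0 < x -> 0 < y -> log2 (x * y) = log2 x + log2 y.
Proof. by move=> x0 y0; rewrite /log2 lnM ?posrE // mulrDl. Qed.

Lemma log2V x : 0 < x -> log2 x^-1 = - log2 x.
Proof. by move=> x0; rewrite /log2 lnV ?posrE // mulNr. Qed.

Lemma log2X x n : 0 < x -> log2 (x ^+ n) = n%:R * log2 x.
Proof. by move=> x0; rewrite /log2 lnXn // mulr_natl mulrnAl. Qed.

Lemma log2_ge_ratio x (m k : nat) : (0 < k)%N -> 0 < x ->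
  2 ^+ m <= x ^+ k -> m%:R / k%:R <= log2 x.
Proof.
move=> k0 x0 le_mk.
have : ln (2 ^+ m) <= ln (x ^+ k) by rewrite ler_ln ?posrE ?exprn_gt0.
rewrite !lnXn // => {}le_mk.
rewrite /log2 ler_pdivrMr ?ltr0n // mulrAC ler_pdivlMr ?ln2_gt0 //.
by rewrite mulr_natl mulr_natr.
Qed.

Lemma log2_lt_ratio x (m k : nat) : (0 < k)%N -> 0 < x ->
  x ^+ k < 2 ^+ m -> log2 x < m%:R / k%:R.
Proof.
move=> k0 x0 lt_km.
have : ln (x ^+ k) < ln (2 ^+ m) by rewrite ltr_ln ?posrE ?exprn_gt0.
rewrite !lnXn // => {}lt_km.
rewrite /log2 ltr_pdivlMr ?ltr0n // mulrAC ltr_pdivrMr ?ln2_gt0 //.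
by rewrite mulr_natl mulr_natr.
Qed.

End Log2.

Section Threshold.
Variable R : realType.
Implicit Types x y : R.

Definition avl_alpha : R := sup [set x : R | 0 < x /\ subcritical x].

Lemma subcritical_le_1631 x : 0 < x -> subcritical x -> x <= 1631%:R / 3125%:R.
Proof.
move=> x0 sub_x; rewrite leNgt; apply/negP => /ltW le_x.
have pos : 0 < 1631%:R / 3125%:R :> R by lra.
exact: subcritical_supercritical x0 sub_x (supercritical_ge pos le_x (supercritical_1631 R)).
Qed.

Lemma has_sup_subcritical : has_sup [set x : R | 0 < x /\ subcritical x].
Proof.
split; first by exists (5219%:R / 10000%:R); split; [lra | exact: subcritical_5219].
by exists (1631%:R / 3125%:R) => x [x0 sub_x]; exact: subcritical_le_1631.
Qed.

Lemma avl_alpha_ge : 5219%:R / 10000%:R <= avl_alpha.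
Proof.
by apply: sup_upper_bound has_sup_subcritical _ _; split; [lra | exact: subcritical_5219].
Qed.

Lemma avl_alpha_le : avl_alpha <= 1631%:R / 3125%:R.
Proof.
by apply: ge_sup has_sup_subcritical.1 _ => x [x0 sub_x]; exact: subcritical_le_1631.
Qed.

Lemma avl_alpha_gt0 : 0 < avl_alpha.
Proof. by have := avl_alpha_ge; lra. Qed.

Lemma subcritical_lt_alpha x : 0 < x -> x < avl_alpha -> subcritical x.
Proof.
move=> x0 /sup_gt-/(_ has_sup_subcritical.1) [y [y0 sub_y] lt_xy].
exact: subcritical_le x0 (ltW lt_xy) sub_y.
Qed.

Lemma supercritical_gt_alpha y : avl_alpha < y -> supercritical y.
Proof.
move=> lt_y; have a0 := avl_alpha_gt0; have y0 : 0 < y by lra.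
have [//|not_sup_y] := pselect (supercritical y).
have not_sub z : avl_alpha < z -> ~ subcritical z.
  move=> lt_z sub_z.
  have := sup_upper_bound has_sup_subcritical (conj (lt_trans a0 lt_z) sub_z).
  by rewrite leNgt lt_z.
pose x := (avl_alpha + y) / 2.
have x0 : 0 < x by rewrite /x; lra.
have critical_x : critical x.
  split; first by apply: not_sub; rewrite /x; lra.
  by move=> sup_x; apply: not_sup_y; apply: supercritical_ge x0 _ sup_x; rewrite /x; lra.
have := critical_unique x0 y0 critical_x (conj (not_sub y lt_y) not_sup_y).
by rewrite /x; lra.
Qed.

Lemma cvg_avl_root (r : nat -> R) : (forall h, 0 < r h /\ avl (r h) h = 3^-1) ->
  r @ \oo --> avl_alpha.
Proof.
move=> root; apply/cvgrPdist_lt => e e0; have a0 := avl_alpha_gt0.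
pose x := Num.max (avl_alpha - e) (avl_alpha / 2).
have x0 : 0 < x by rewrite lt_max; apply/orP; right; lra.
have lt_x : x < avl_alpha by rewrite gt_max; apply/andP; split; lra.
have lt_y : avl_alpha < avl_alpha + e by lra.
have y0 : 0 < avl_alpha + e by lra.
have lo := subcritical_eventually x0 (subcritical_lt_alpha x0 lt_x).
have hi := supercritical_eventually y0 (supercritical_gt_alpha lt_y).
apply: filterS (filterI lo hi) => h [lo_h hi_h]; have [r0 rh] := root h.
have : x < r h by rewrite -(avl_ltr h) ?posrE // rh.
have : r h < avl_alpha + e by rewrite -(avl_ltr h) ?posrE // rh.
have : avl_alpha - e <= x by rewrite le_max lexx.
by rewrite ltr_distlC => *; apply/andP; split; lra.
Qed.

Lemma log2_avl_alpha : 938 / 1000 <= log2 avl_alpha^-1 < 939 / 1000.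
Proof.
have a_pos : avl_alpha \is Num.pos by rewrite posrE avl_alpha_gt0.
have ai0 : 0 < avl_alpha^-1 by rewrite invr_gt0.
have lo : 3125%:R / 1631%:R <= avl_alpha^-1.
  have pos : 1631%:R / 3125%:R \is @Num.pos R by rewrite posrE; lra.
  by rewrite -[3125%:R / _]invf_div lef_pV2 // avl_alpha_le.
have hi : avl_alpha^-1 <= 10000%:R / 5219%:R.
  have pos : 5219%:R / 10000%:R \is @Num.pos R by rewrite posrE; lra.
  by rewrite -[10000%:R / _]invf_div lef_pV2 // avl_alpha_ge.
apply/andP; split.
  apply: le_trans (_ : (106 / 113 : R) <= _); first lra.
  apply: log2_ge_ratio => //; apply: le_trans (two_expr_le R) _.
  by apply: lerXn2r; rewrite ?nnegrE; lra.
apply: lt_le_trans (_ : _ < (61 / 65 : R)) _; last lra.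
apply: log2_lt_ratio => //; apply: le_lt_trans (expr_lt_two R).
by apply: lerXn2r; rewrite ?nnegrE; lra.
Qed.

End Threshold.

Section Subexponential.
Variable R : realType.

Lemma avl_count_subexponential (kappa : R) : 1 < kappa ->
  (fun n => avl_count R n * avl_alpha R ^+ n / kappa ^+ n) @ \oo --> 0.
Proof.
move=> k1; have k0 : 0 < kappa by lra.
have a0 := avl_alpha_gt0 R.
have ak : avl_alpha R / kappa < avl_alpha R by rewrite ltr_pdivrMr // ltr_pMr.
have ak0 : 0 < avl_alpha R / kappa by rewrite divr_gt0.
pose g := (avl_alpha R / kappa + avl_alpha R) / 2.
have g0 : 0 < g by rewrite /g; lra.
have lt_ga : g < avl_alpha R by rewrite /g; lra.
have [C boundC] := subcritical_count_bounded g0 (subcritical_lt_alpha g0 lt_ga).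
apply: (cvg_bounded_rescaled g0 a0 k0 _ (avl_count_ge0 R) boundC).
by rewrite mulrC -ltr_pdivrMr // /g; lra.
Qed.

(* a_0 = 0, hence the value at 0. *)
Definition avl_theta (n : nat) : R :=
  if n is 0 then 1 else avl_count R n * avl_alpha R ^+ n.

Lemma avl_theta_gt0 n : 0 < avl_theta n.
Proof. by case: n => // n; rewrite mulr_gt0 ?avl_count_gt0 ?exprn_gt0 ?avl_alpha_gt0. Qed.

Lemma log2_avl_count n : (0 < n)%N ->
  log2 (avl_count R n) = n%:R * log2 (avl_alpha R)^-1 + log2 (avl_theta n).
Proof.
case: n => // n _; have a0 := avl_alpha_gt0 R.
rewrite /avl_theta log2M ?avl_count_gt0 ?exprn_gt0 // log2X // log2V //; lra.
Qed.

Lemma avl_theta_subexponential (kappa : R) : 1 < kappa ->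
  (fun n => avl_theta n / kappa ^+ n) @ \oo --> 0.
Proof.
by move=> /avl_count_subexponential; rewrite -cvg_shiftS => lim; rewrite -cvg_shiftS.
Qed.

End Subexponential.

Theorem theorem2 (R : realType) (alpha_ : nat -> R) :
  (forall h : nat, 0 < alpha_ h /\ (AVLpoly R h).[alpha_ h] = 3^-1) ->
  exists alpha : R,
    [/\ alpha_ @ \oo --> alpha,
        5219 / 10000 <= alpha < 5220 / 10000,
        938 / 1000 <= log2 alpha^-1 < 939 / 1000 &
        exists theta : nat -> R,
          [/\ (forall n : nat, 0 < theta n),
              (forall n : nat, (0 < n)%N ->
                 log2 (avl_count R n) = n%:R * log2 alpha^-1 + log2 (theta n)) &
              (forall kappa : R, 1 < kappa ->
                 (fun n : nat => theta n / kappa ^+ n) @ \oo --> 0)]].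
Proof.
move=> root; exists (avl_alpha R); split.
- exact: cvg_avl_root.
- by apply/andP; split; [have := avl_alpha_ge R | have := avl_alpha_le R]; lra.
- exact: log2_avl_alpha.
- exists (avl_theta R); split.
  + exact: avl_theta_gt0.
  + exact: log2_avl_count.
  + exact: avl_theta_subexponential.
Qed.
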